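(* For every $k\ge 0$ let $a(k)$ be the exponent of the largest power of $2$ dividing $k!$. For every $n\ge1$, let $f(n)$ be the minimum of $\Phi(T)$ over all binary phylogenetic trees $T$ with $n$ leaves. Then for every $n\ge 1$, $$f(n)=\sum_{k=0}^{n-1}a(k).$$
   Context: A phylogenetic tree with $n$ leaves is a rooted tree whose leaves are bijectively labeled by $\{1,\dots,n\}$; binary means every internal node has exactly two children. The depth $\delta_T(v)$ is the number of arcs from the root to $v$; for leaves $i,j$, $\varphi_T(i,j)=\delta_T(LCA_T(i,j))$ ($LCA$ = lowest common ancestor), and $\Phi(T)=\sum_{1\le i<j\le n}\varphi_T(i,j)$ is the total cophenetic index. *)

From mathcomp Require Import all_boot.
Set Implicit Arguments. Unset Strict Implicit. Unset Printing Implicit Defensive.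

Inductive btree : Type :=
| Leaf of nat
| Node of btree & btree.

Fixpoint leaves (t : btree) : seq nat :=
  match t with
  | Leaf i => [:: i]
  | Node l r => leaves l ++ leaves r
  end.

Definition phylo (n : nat) (t : btree) : Prop :=
  perm_eq (leaves t) (iota 1 n).

Fixpoint lca_depth (t : btree) (i j : nat) : nat :=
  match t with
  | Leaf _ => 0
  | Node l r =>
      if (i \in leaves l) && (j \in leaves l) then (lca_depth l i j).+1
      else if (i \in leaves r) && (j \in leaves r) then (lca_depth r i j).+1
      else 0
  end.

Definition Phi (n : nat) (t : btree) : nat :=
  \sum_(1 <= i < n.+1) \sum_(i.+1 <= j < n.+1) lca_depth t i j.

Definition a (k : nat) : nat := logn 2 k`!.

From mathcomp Require Import all_boot.
From mathcomp Require Import zify.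

(* Put T(m) = S(m) + C(m,2): this is what a subtree with m
   leaves contributes to the index of the whole tree, since the root of the
   subtree raises the depth of each of its C(m,2) leaf pairs by one.
   Legendre's step a(n) = n/2 + a(n/2) yields S(n) = T(floor(n/2)) +
   T(ceil(n/2)).  As a is nondecreasing, the increments a(m) + m of T are
   nondecreasing, i.e. T is discretely convex, so among all splittings
   x + y = n the sum T(x) + T(y) is smallest for the balanced one:
   S(x + y) <= T(x) + T(y).

   Splitting a tree at its root gives the
   recursion Phi(Node l r) = (Phi(l) + C(|l|,2)) + (Phi(r) + C(|r|,2)), so
   induction on the tree together with the splitting inequality gives
   Phi >= S(n), while the balanced tree (halving the leaf set at every node)
   attains S(n) by the halving identity. *)

Definition asum (n : nat) : nat := \sum_(k < n) a k.

(* T(m) = S(m) + C(m,2), the least contribution of an m-leaf subtree hanging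
   below the root of a larger tree. *)
Definition subtree_cost (n : nat) : nat := asum n + 'C(n, 2).

Lemma asumS n : asum n.+1 = asum n + a n.
Proof. by rewrite /asum big_ord_recr. Qed.

Lemma subtree_costS n : subtree_cost n.+1 = subtree_cost n + (a n + n).
Proof. by rewrite /subtree_cost asumS binS bin1; lia. Qed.

Lemma aS n : a n.+1 = logn 2 n.+1 + a n.
Proof. by rewrite /a factS lognM // fact_gt0. Qed.

(* Multiplying by an odd number does not change the 2-adic valuation. *)
Lemma a_double_succ m : a m.*2.+1 = a m.*2.
Proof. by rewrite aS logn_coprime // coprime2n /= odd_double. Qed.

Lemma a_double m : a m.*2 = m + a m.
Proof.
elim: m => [//|m IHm].
rewrite doubleS aS a_double_succ IHm [a m.+1]aS -doubleS -mul2n lognM //.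
by rewrite (@logn_prime 2 2) //=; lia.
Qed.

Lemma a_half n : a n = n./2 + a n./2.
Proof.
rewrite -[in LHS](odd_double_half n).
by case: odd; rewrite ?add1n ?add0n ?a_double_succ a_double.
Qed.

Lemma a_mono : {homo a : m n / m <= n}.
Proof. by apply: homo_leq => [//|m n p|m]; [exact: leq_trans | rewrite aS leq_addl]. Qed.

Lemma half_add_uphalf n : n./2 + uphalf n = n.
Proof. by rewrite uphalf_half addnCA addnn odd_double_half. Qed.

(* Halving identity: S(n) = T(floor(n/2)) + T(ceil(n/2)).  Passing from n to
   n+1 increases the smaller half by one, which adds a(floor(n/2)) +
   floor(n/2) = a(n) to the right-hand side by a_half. *)
Lemma asum_halves n : asum n = subtree_cost n./2 + subtree_cost (uphalf n).
Proof.
elim: n => [|n IHn]; first by rewrite /subtree_cost /asum big_ord0.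
by rewrite asumS IHn -uphalfE /= subtree_costS [a n]a_half; lia.
Qed.

(* For a discretely convex f : nat -> nat (nondecreasing increments), moving
   two arguments with a fixed sum towards each other does not increase
   f x + f y; in particular the balanced splitting is optimal. *)
Section ConvexSplit.

Variable f : nat -> nat.
Hypothesis f_convex : forall x y, x <= y -> f x.+1 + f y <= f x + f y.+1.

Lemma convex_shift k x y : x + k <= y - k -> f (x + k) + f (y - k) <= f x + f y.
Proof.
elim: k => [|k IHk] le_xy; first by rewrite addn0 subn0.
apply: leq_trans (IHk _); last by lia.
have -> : y - k = (y - k.+1).+1 by lia.
by rewrite addnS; apply: f_convex; lia.
Qed.

Lemma convex_balanced x y : f (x + y)./2 + f (uphalf (x + y)) <= f x + f y.
Proof.
wlog le_xy : x y / x <= y.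
  move=> W; case: (leqP x y) => [/W // | /ltnW/W].
  by rewrite [y + x]addnC [f y + _]addnC.
have := half_add_uphalf (x + y).
set h := (x + y)./2; set u := uphalf (x + y) => sum_hu.
have le_xh : x <= h by rewrite /h geq_half_double -addnn leq_add2l.
have := @convex_shift (h - x) x y.
have -> : x + (h - x) = h by lia.
have -> : y - (h - x) = u by lia.
by apply; lia.
Qed.

End ConvexSplit.

Lemma subtree_cost_convex x y :
  x <= y -> subtree_cost x.+1 + subtree_cost y <= subtree_cost x + subtree_cost y.+1.
Proof. by move=> le_xy; have := @a_mono x y le_xy; rewrite !subtree_costS; lia. Qed.

Lemma asum_split x y : asum (x + y) <= subtree_cost x + subtree_cost y.
Proof. by rewrite asum_halves; apply: convex_balanced; apply: subtree_cost_convex. Qed.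

Definition pair_sum (s : seq nat) (F : nat -> nat -> nat) : nat :=
  \sum_(i <- s) \sum_(j <- s | i < j) F i j.

Lemma eq_pair_sum s F G : {in s &, F =2 G} -> pair_sum s F = pair_sum s G.
Proof.
move=> eqFG; apply: eq_big_seq => i si; rewrite big_seq_cond [RHS]big_seq_cond.
by apply: eq_bigr => j /andP[sj _]; apply: eqFG.
Qed.

Lemma pair_sumD s F G :
  pair_sum s (fun i j => F i j + G i j) = pair_sum s F + pair_sum s G.
Proof. by rewrite /pair_sum -big_split; apply: eq_bigr => i _; rewrite big_split. Qed.

Lemma pair_sum_cat s1 s2 F :
  {in s1 & s2, forall i j, F i j = 0 /\ F j i = 0} ->
  pair_sum (s1 ++ s2) F = pair_sum s1 F + pair_sum s2 F.
Proof.
move=> cross0; rewrite /pair_sum big_cat; congr (_ + _).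
  apply: eq_big_seq => i si; rewrite big_cat /= [X in _ + X]big1_seq ?addn0 //.
  by move=> j /andP[_ sj]; case: (cross0 i j).
apply: eq_big_seq => i si; rewrite big_cat /= big1_seq ?add0n //.
by move=> j /andP[_ sj]; case: (cross0 j i).
Qed.

Lemma count_lt_gt x s :
  x \notin s -> count (fun j => x < j) s + count (fun j => j < x) s = size s.
Proof.
move=> xNs; rewrite -(count_predC (fun j => x < j)); congr (_ + _).
apply: eq_in_count => j sj /=.
have jNx : j != x by apply: contraNneq xNs => <-.
by rewrite ltn_neqAle jNx leqNgt.
Qed.

Lemma pair_sum1 {s} : uniq s -> pair_sum s (fun _ _ => 1) = 'C(size s, 2).
Proof.
rewrite /pair_sum; elim: s => [|x s IHs] /=; first by rewrite big_nil.
case/andP=> xNs us; rewrite big_cons big_cons ltnn sum1_count.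
have -> : \sum_(i <- s) \sum_(j <- x :: s | i < j) 1 =
          \sum_(i <- s) ((i < x) + \sum_(j <- s | i < j) 1).
  by apply: eq_bigr => i _; rewrite big_cons; case: (i < x).
rewrite big_split /= IHs // -big_mkcond /= sum1_count.
by rewrite addnA count_lt_gt // binS bin1 addnC.
Qed.

Definition cophenetic (t : btree) : nat := pair_sum (leaves t) (lca_depth t).

Lemma big_iota_gt (F : nat -> nat) i n :
  \sum_(i.+1 <= j < n.+1) F j = \sum_(j <- iota 1 n | i < j) F j.
Proof. by rewrite (big_nat_widenl _ 1) // /index_iota subn1. Qed.

Lemma Phi_cophenetic n t : phylo n t -> Phi n t = cophenetic t.
Proof.
move=> ph; rewrite /Phi {1}/index_iota subn1 /cophenetic /pair_sum (perm_big _ ph).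
apply: eq_bigr => i _; rewrite (perm_big _ ph); exact: big_iota_gt.
Qed.

(* Root recursion: every pair of leaves of the same subtree gains one unit of
   depth, while pairs separated by the root contribute 0. *)
Lemma cophenetic_Node l r : uniq (leaves l ++ leaves r) ->
  cophenetic (Node l r) =
    (cophenetic l + 'C(size (leaves l), 2)) + (cophenetic r + 'C(size (leaves r), 2)).
Proof.
rewrite cat_uniq => /and3P[ul /hasPn notl ur].
have notr i : i \in leaves l -> i \notin leaves r by apply: contraL; apply: notl.
rewrite /cophenetic /= pair_sum_cat; last first.
  move=> i j il jr /=.
  by rewrite (negbTE (notl j jr)) (negbTE (notr i il)) !andbF !andFb.
rewrite -(pair_sum1 ul) -(pair_sum1 ur) -!pair_sumD.
congr (_ + _); apply: eq_pair_sum => i j si sj /=.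
  by rewrite si sj addn1.
by rewrite (negbTE (notl i si)) si sj addn1.
Qed.

Lemma cophenetic_lower {t} : uniq (leaves t) -> asum (size (leaves t)) <= cophenetic t.
Proof.
elim: t => [i|l IHl r IHr] u_lr; first by rewrite /asum big_ord1.
have [ul ur] : uniq (leaves l) /\ uniq (leaves r).
  by move: u_lr; rewrite cat_uniq => /and3P[].
rewrite cophenetic_Node //= size_cat; apply: leq_trans (asum_split _ _) _.
by apply: leq_add; rewrite leq_add2r; [apply: IHl | apply: IHr].
Qed.

Lemma balanced_tree k lo : 0 < k ->
  exists t, leaves t = iota lo k /\ cophenetic t = asum k.
Proof.
elim/ltn_ind: k lo => k IHk lo k_gt0.
have [le_k1 | lt_1k] := leqP k 1.
  have -> : k = 1 by lia.
  exists (Leaf lo); split=> //.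
  by rewrite /cophenetic /pair_sum /asum big_ord1 !big_cons !big_nil ltnn.
have split_k := half_add_uphalf k.
have [h_gt0 u_gt0] : 0 < k./2 /\ 0 < uphalf k by rewrite half_gt0 uphalf_gt0; lia.
have [lt_hk lt_uk] : k./2 < k /\ uphalf k < k by lia.
have [tl [Ll Cl]] := IHk k./2 lt_hk lo h_gt0.
have [tr [Lr Cr]] := IHk (uphalf k) lt_uk (lo + k./2) u_gt0.
have Lt : leaves (Node tl tr) = iota lo k by rewrite /= Ll Lr -iotaD split_k.
exists (Node tl tr); split=> //.
rewrite cophenetic_Node; last by rewrite -[_ ++ _]/(leaves (Node tl tr)) Lt iota_uniq.
by rewrite Cl Cr Ll Lr !size_iota [asum k]asum_halves.
Qed.

Theorem mainTheorem12 (n : nat) (hn : 1 <= n) :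
  (exists t : btree, phylo n t /\ Phi n t = \sum_(k < n) a k) /\
  (forall t : btree, phylo n t -> \sum_(k < n) a k <= Phi n t).
Proof.
split.
  have [t [Lt Ct]] := balanced_tree n 1 hn.
  have ph : phylo n t by rewrite /phylo Lt.
  by exists t; rewrite Phi_cophenetic // Ct.
move=> t ph; rewrite Phi_cophenetic //.
have uniq_t : uniq (leaves t) by rewrite (perm_uniq ph) iota_uniq.
by have := cophenetic_lower uniq_t; rewrite (perm_size ph) size_iota.
Qed.
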